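(* Let $\varepsilon>0$, $\bar\theta,\bar\varphi\in\mathbb{R}$, and let $P_1,P_2,P_3\in\mathbb{R}^3$ with $\|P_i\|\le1$ be $\varepsilon$-spanning for $(\bar\theta,\bar\varphi)$. Let $\theta,\varphi\in\mathbb{R}$ with $|\theta-\bar\theta|,|\varphi-\bar\varphi|\le\varepsilon$, and assume $\langle X(\theta,\varphi),P_i\rangle>0$ for $i=1,2,3$. Then $X(\theta,\varphi)\in\operatorname{span}^+(P_1,P_2,P_3)$.
   Context: $R(\alpha)=\begin{pmatrix}\cos\alpha&-\sin\alpha\\ \sin\alpha&\cos\alpha\end{pmatrix}$; $X(\theta,\varphi)=(\cos\theta\sin\varphi,\sin\theta\sin\varphi,\cos\varphi)^t$; $M(\theta,\varphi)=\begin{pmatrix}-\sin\theta&\cos\theta&0\\ -\cos\theta\cos\varphi&-\sin\theta\cos\varphi&\sin\varphi\end{pmatrix}$. For $M=M(\bar\theta,\bar\varphi)$, points $P_1,P_2,P_3$ of norm $\le1$ are $\varepsilon$-spanning for $(\bar\theta,\bar\varphi)$ if $\langle R(\pi/2)MP_1,MP_2\rangle$, $\langle R(\pi/2)MP_2,MP_3\rangle$, $\langle R(\pi/2)MP_3,MP_1\rangle$ are all $>2\varepsilon(\sqrt2+\varepsilon)$. $\operatorname{span}^+(P_1,P_2,P_3)=\{\sum\lambda_iP_i:\lambda_i>0\}$. *)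

From Stdlib Require Import Reals.
Open Scope R_scope.

Definition vec3 := (R * R * R)%type.
Definition vec2 := (R * R)%type.

Definition v3x (v : vec3) : R := fst (fst v).
Definition v3y (v : vec3) : R := snd (fst v).
Definition v3z (v : vec3) : R := snd v.

Definition dot3 (u v : vec3) : R := v3x u * v3x v + v3y u * v3y v + v3z u * v3z v.
Definition dot2 (u v : vec2) : R := fst u * fst v + snd u * snd v.

Definition norm3 (v : vec3) : R := sqrt (dot3 v v).

Definition rot (a : R) (u : vec2) : vec2 :=
  (cos a * fst u - sin a * snd u, sin a * fst u + cos a * snd u).

Definition Xsph (th ph : R) : vec3 := (cos th * sin ph, sin th * sin ph, cos ph).

Definition Mapp (th ph : R) (P : vec3) : vec2 :=
  (- sin th * v3x P + cos th * v3y P,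
   - cos th * cos ph * v3x P - sin th * cos ph * v3y P + sin ph * v3z P).

Definition eps_spanning (eps thb phb : R) (P1 P2 P3 : vec3) : Prop :=
  let M := Mapp thb phb in
  norm3 P1 <= 1 /\ norm3 P2 <= 1 /\ norm3 P3 <= 1 /\
  dot2 (rot (PI / 2) (M P1)) (M P2) > 2 * eps * (sqrt 2 + eps) /\
  dot2 (rot (PI / 2) (M P2)) (M P3) > 2 * eps * (sqrt 2 + eps) /\
  dot2 (rot (PI / 2) (M P3)) (M P1) > 2 * eps * (sqrt 2 + eps).

Definition span_pos (P1 P2 P3 : vec3) (X : vec3) : Prop :=
  exists l1 l2 l3 : R, l1 > 0 /\ l2 > 0 /\ l3 > 0 /\
    v3x X = l1 * v3x P1 + l2 * v3x P2 + l3 * v3x P3 /\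
    v3y X = l1 * v3y P1 + l2 * v3y P2 + l3 * v3y P3 /\
    v3z X = l1 * v3z P1 + l2 * v3z P2 + l3 * v3z P3.

(* The rows of M(θ̄,φ̄) complete X(θ̄,φ̄) to a positively oriented orthonormal
   frame, so ⟨R(π/2) M P, M Q⟩ is the triple product det(X(θ̄,φ̄), P, Q).
   Since |P × Q| ≤ 1 and X is 1-Lipschitz in each angle, moving from (θ̄,φ̄)
   to (θ,φ) changes these determinants by at most 2ε < 2ε(√2+ε), so
   det(X, P_i, P_{i+1}) > 0 for the cyclic pairs.  Together with
   ⟨X, P_i⟩ > 0, Cramer's rule then writes X as a positive combination of
   the P_i. *)

From Stdlib Require Import Reals Lra Psatz.
Open Scope R_scope.

Lemma sin_sq_le_sq x : sin x * sin x <= x * x.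
Proof.
  assert (pos : forall y, 0 < y -> sin y * sin y <= y * y).
  { intros y Hy.
    pose proof (sin2_cos2 y) as Hsc; unfold Rsqr in Hsc.
    pose proof (sin_lt_x y Hy).
    destruct (Rle_lt_dec 1 y).
    - nra.
    - assert (0 < sin y) by (apply sin_gt_0; pose proof PI2_1; lra).
      nra. }
  destruct (Rtotal_order x 0) as [Hx | [-> | Hx]].
  - pose proof (pos (- x) ltac:(lra)) as H; rewrite sin_neg in H; nra.
  - rewrite sin_0; lra.
  - exact (pos x Hx).
Qed.

Lemma chord_sq_le a b :
  (cos a - cos b) * (cos a - cos b) + (sin a - sin b) * (sin a - sin b)
  <= (a - b) * (a - b).
Proof.
  pose proof (sin2_cos2 a) as Ha; pose proof (sin2_cos2 b) as Hb.
  unfold Rsqr in Ha, Hb.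
  assert (Hcos : cos (a - b) = 1 - 2 * sin ((a - b) / 2) * sin ((a - b) / 2)).
  { rewrite <- cos_2a_sin; f_equal; field. }
  rewrite cos_minus in Hcos.
  pose proof (sin_sq_le_sq ((a - b) / 2)).
  nra.
Qed.

Definition cross (P Q : vec3) : vec3 :=
  (v3y P * v3z Q - v3z P * v3y Q,
   v3z P * v3x Q - v3x P * v3z Q,
   v3x P * v3y Q - v3y P * v3x Q).

Definition sub3 (u v : vec3) : vec3 :=
  (v3x u - v3x v, v3y u - v3y v, v3z u - v3z v).

Ltac vec3_unfold :=
  unfold dot3, cross, sub3, Xsph, v3x, v3y, v3z in *; simpl in *.

Lemma dot3_self_ge0 P : 0 <= dot3 P P.
Proof. destruct P as [[a b] c]; vec3_unfold; nra. Qed.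

Lemma dot3_self_le1 P : norm3 P <= 1 -> dot3 P P <= 1.
Proof.
  unfold norm3; intros H.
  pose proof (sqrt_sqrt _ (dot3_self_ge0 P)).
  pose proof (sqrt_pos (dot3 P P)).
  nra.
Qed.

Lemma dot3_subl u v w : dot3 (sub3 u v) w = dot3 u w - dot3 v w.
Proof. destruct u as [[a b] c]; destruct v as [[d e] f]; vec3_unfold; ring. Qed.

Lemma lagrange_identity P Q :
  dot3 (cross P Q) (cross P Q) = dot3 P P * dot3 Q Q - dot3 P Q * dot3 P Q.
Proof. destruct P as [[a b] c]; destruct Q as [[d e] f]; vec3_unfold; ring. Qed.

Lemma dot3_cross_self_le P Q :
  dot3 (cross P Q) (cross P Q) <= dot3 P P * dot3 Q Q.
Proof. rewrite lagrange_identity; nra. Qed.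

Lemma dot3_cross_self_le1 P Q :
  norm3 P <= 1 -> norm3 Q <= 1 -> dot3 (cross P Q) (cross P Q) <= 1.
Proof.
  intros NP NQ.
  pose proof (dot3_cross_self_le P Q).
  pose proof (dot3_self_le1 P NP); pose proof (dot3_self_le1 Q NQ).
  pose proof (dot3_self_ge0 P); pose proof (dot3_self_ge0 Q).
  nra.
Qed.

Lemma Rabs_dot3_le u w d :
  dot3 u u <= d * d -> dot3 w w <= 1 -> Rabs (dot3 u w) <= Rabs d.
Proof.
  intros Hu Hw.
  pose proof (dot3_self_ge0 (cross u w)) as Hlag.
  rewrite lagrange_identity in Hlag.
  pose proof (dot3_self_ge0 u); pose proof (dot3_self_ge0 w).
  apply Rsqr_le_abs_0; unfold Rsqr; nra.
Qed.

Lemma rot_PI2_Mapp_dot th ph P Q :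
  dot2 (rot (PI / 2) (Mapp th ph P)) (Mapp th ph Q)
  = dot3 (Xsph th ph) (cross P Q).
Proof.
  unfold rot; rewrite cos_PI2, sin_PI2.
  pose proof (sin2_cos2 th) as H; unfold Rsqr in H.
  destruct P as [[a b] c]; destruct Q as [[d e] f].
  unfold dot2, Mapp; vec3_unfold.
  transitivity (cos th * sin ph * (b * f - c * e) + sin th * sin ph * (c * d - a * f)
    + cos ph * (a * e - b * d)
    + cos ph * (sin th * sin th + cos th * cos th - 1) * (a * e - b * d)).
  - ring.
  - rewrite H; ring.
Qed.

Lemma Xsph_theta_dist th thb ph :
  let D := sub3 (Xsph th ph) (Xsph thb ph) in
  dot3 D D <= (th - thb) * (th - thb).
Proof.
  intros D; subst D; vec3_unfold.
  set (c := (cos th - cos thb) * (cos th - cos thb)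
            + (sin th - sin thb) * (sin th - sin thb)).
  pose proof (chord_sq_le th thb) as Hc; fold c in Hc.
  assert (0 <= c).
  { subst c; apply Rplus_le_le_0_compat; apply Rle_0_sqr. }
  assert (sin ph * sin ph <= 1) by (pose proof (SIN_bound ph); nra).
  transitivity (sin ph * sin ph * c).
  - right; subst c; ring.
  - apply Rle_trans with c; [| exact Hc].
    rewrite <- (Rmult_1_l c) at 2; apply Rmult_le_compat_r; assumption.
Qed.

Lemma Xsph_phi_dist th ph phb :
  let D := sub3 (Xsph th ph) (Xsph th phb) in
  dot3 D D <= (ph - phb) * (ph - phb).
Proof.
  intros D; subst D; vec3_unfold.
  pose proof (chord_sq_le ph phb).
  pose proof (sin2_cos2 th) as Hth; unfold Rsqr in Hth.
  transitivity ((sin th * sin th + cos th * cos th) * ((sin ph - sin phb) * (sin ph - sin phb))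
                + (cos ph - cos phb) * (cos ph - cos phb)).
  - right; ring.
  - rewrite Hth; lra.
Qed.

Lemma Xsph_dot_lipschitz th ph thb phb w :
  dot3 w w <= 1 ->
  Rabs (dot3 (Xsph th ph) w - dot3 (Xsph thb phb) w)
  <= Rabs (th - thb) + Rabs (ph - phb).
Proof.
  intros Hw.
  replace (dot3 (Xsph th ph) w - dot3 (Xsph thb phb) w)
    with (dot3 (sub3 (Xsph th ph) (Xsph thb ph)) w
          + dot3 (sub3 (Xsph thb ph) (Xsph thb phb)) w)
    by (rewrite !dot3_subl; ring).
  eapply Rle_trans; [apply Rabs_triang |].
  apply Rplus_le_compat; apply Rabs_dot3_le; auto.
  - apply Xsph_theta_dist.
  - apply Xsph_phi_dist.
Qed.

Lemma Xsph_dot_pos_near eps th ph thb phb w :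
  dot3 w w <= 1 -> Rabs (th - thb) <= eps -> Rabs (ph - phb) <= eps ->
  dot3 (Xsph thb phb) w > 2 * eps -> dot3 (Xsph th ph) w > 0.
Proof.
  intros Hw Hth Hph Hbar.
  pose proof (Xsph_dot_lipschitz th ph thb phb w Hw) as Hlip.
  rewrite Rabs_minus_sym in Hlip.
  pose proof (Rle_abs (dot3 (Xsph thb phb) w - dot3 (Xsph th ph) w)).
  lra.
Qed.

(* Cramer's rule: det(P1,P2,P3) X = Σ det(X, P_{i+1}, P_{i+2}) P_i, and pairing
   with X gives det(P1,P2,P3) |X|² = Σ det(X, P_{i+1}, P_{i+2}) ⟨X, P_i⟩ > 0. *)
Lemma span_pos_of_dot_cross_pos X P1 P2 P3 :
  dot3 X P1 > 0 -> dot3 X P2 > 0 -> dot3 X P3 > 0 ->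
  dot3 X (cross P2 P3) > 0 -> dot3 X (cross P3 P1) > 0 ->
  dot3 X (cross P1 P2) > 0 ->
  span_pos P1 P2 P3 X.
Proof.
  intros H1 H2 H3 K1 K2 K3.
  set (D := dot3 P1 (cross P2 P3)).
  set (k1 := dot3 X (cross P2 P3)) in *.
  set (k2 := dot3 X (cross P3 P1)) in *.
  set (k3 := dot3 X (cross P1 P2)) in *.
  assert (Cramer : D * v3x X = k1 * v3x P1 + k2 * v3x P2 + k3 * v3x P3
                /\ D * v3y X = k1 * v3y P1 + k2 * v3y P2 + k3 * v3y P3
                /\ D * v3z X = k1 * v3z P1 + k2 * v3z P2 + k3 * v3z P3).
  { subst D k1 k2 k3; destruct X as [[x y] z], P1 as [[a1 b1] c1],
      P2 as [[a2 b2] c2], P3 as [[a3 b3] c3]; vec3_unfold; repeat split; ring. }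
  destruct Cramer as (Ex & Ey & Ez).
  assert (HD : D * dot3 X X = k1 * dot3 X P1 + k2 * dot3 X P2 + k3 * dot3 X P3).
  { unfold dot3.
    replace (D * _) with (D * v3x X * v3x X + D * v3y X * v3y X + D * v3z X * v3z X)
      by ring.
    rewrite Ex, Ey, Ez; ring. }
  assert (Dpos : D > 0).
  { pose proof (dot3_self_ge0 X).
    assert (0 < k1 * dot3 X P1) by (apply Rmult_lt_0_compat; lra).
    assert (0 < k2 * dot3 X P2) by (apply Rmult_lt_0_compat; lra).
    assert (0 < k3 * dot3 X P3) by (apply Rmult_lt_0_compat; lra).
    destruct (Rle_lt_dec D 0); nra. }
  exists (k1 / D), (k2 / D), (k3 / D).
  repeat split; try (apply Rdiv_lt_0_compat; lra);
    apply (Rmult_eq_reg_l D); try lra;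
    [rewrite Ex | rewrite Ey | rewrite Ez]; field; lra.
Qed.

Theorem lemma5p8 (eps thb phb th ph : R) (P1 P2 P3 : vec3) :
  eps > 0 ->
  norm3 P1 <= 1 -> norm3 P2 <= 1 -> norm3 P3 <= 1 ->
  eps_spanning eps thb phb P1 P2 P3 ->
  Rabs (th - thb) <= eps -> Rabs (ph - phb) <= eps ->
  dot3 (Xsph th ph) P1 > 0 -> dot3 (Xsph th ph) P2 > 0 -> dot3 (Xsph th ph) P3 > 0 ->
  span_pos P1 P2 P3 (Xsph th ph).
Proof.
  intros Heps N1 N2 N3 (_ & _ & _ & S12 & S23 & S31) Hth Hph H1 H2 H3.
  rewrite !rot_PI2_Mapp_dot in S12, S23, S31.
  assert (Hmargin : 2 * eps * (sqrt 2 + eps) >= 2 * eps).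
  { pose proof (sqrt_le_1_alt 1 2 ltac:(lra)) as Hs; rewrite sqrt_1 in Hs; nra. }
  assert (Hcross : forall P Q, norm3 P <= 1 -> norm3 Q <= 1 ->
            dot3 (Xsph thb phb) (cross P Q) > 2 * eps * (sqrt 2 + eps) ->
            dot3 (Xsph th ph) (cross P Q) > 0).
  { intros P Q NP NQ S.
    apply (Xsph_dot_pos_near eps th ph thb phb); try lra.
    exact (dot3_cross_self_le1 P Q NP NQ). }
  apply span_pos_of_dot_cross_pos; auto.
Qed.
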